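(* Let $n,d\ge1$, $B>0$ and $\epsilon_i>0$. For a voter $i$ with dataset $D_i=\{\langle X_1,Z_1\rangle,\dots,\langle X_n,Z_n\rangle\}$, $X_j,Z_j\in\mathbb{R}^d$, let $\overline{\boldsymbol\beta}_i(D_i)$ be a (deterministically chosen) maximizer of $\mathcal{L}(\boldsymbol\beta,D_i)=\sum_{j=1}^n\ln\Phi(\boldsymbol\beta^\top(X_j-Z_j))$ over $\{\boldsymbol\beta\in\mathbb{R}^d:\|\boldsymbol\beta\|_1\le B\}$, where $\Phi$ is the standard normal CDF. Consider the randomized algorithm (Algorithm 2) that outputs $\overline{\boldsymbol\beta}_i^*(D_i)=\overline{\boldsymbol\beta}_i(D_i)+\boldsymbol R$, where $\boldsymbol R$ has $d$ independent coordinates, each a zero-mean Laplace variable with scale $2B/\epsilon_i$. Then for each voter $i$ this algorithm satisfies $\epsilon_i$-differential privacy both in the voter-level distributed sense (VLDP) and in the record-level distributed sense (RLDP).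
   Context: VLDP: for any two datasets $D_i,D_i'$ of voter $i$, each consisting of $n$ records (arbitrarily different), and any measurable set $\mathcal{Y}$ of outputs, $\Pr[Y_i(D_i)\in\mathcal{Y}]\le e^{\epsilon_i}\Pr[Y_i(D_i')\in\mathcal{Y}]$. RLDP: the same inequality required only for pairs $D_i,D_i'$ of $n$-record datasets differing in exactly one record. The Laplace distribution with scale $\lambda$ has density $\frac{1}{2\lambda}e^{-|x|/\lambda}$. *)

From HB Require Import structures.
From mathcomp Require Import all_boot all_order all_algebra.
From mathcomp Require Import all_classical all_reals all_analysis.
Set Implicit Arguments. Unset Strict Implicit. Unset Printing Implicit Defensive.
Import Order.TTheory GRing.Theory Num.Theory.
Local Open Scope classical_set_scope.
Local Open Scope ring_scope.

Definition dataset (R : realType) (n d : nat) := 'I_n -> 'rV[R]_d * 'rV[R]_d.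

Definition norm1 (R : realType) (d : nat) (b : 'rV[R]_d) : R :=
  \sum_(k < d) `|b ord0 k|.

Definition Phi (R : realType) (x : R) : R :=
  fine (normal_prob 0 1 `]-oo, x]).

Definition loglik (R : realType) (n d : nat) (b : 'rV[R]_d) (D : dataset R n d)
  : R := \sum_(j < n) ln (Phi (\sum_(k < d) b ord0 k * ((D j).1 ord0 k - (D j).2 ord0 k))).

Definition is_constrained_mle (R : realType) (n d : nat) (B : R)
  (betabar : dataset R n d -> 'rV[R]_d) : Prop :=
  forall D, norm1 (betabar D) <= B /\
    (forall b : 'rV[R]_d, norm1 b <= B -> loglik b D <= loglik (betabar D) D).

Definition laplace_pdf (R : realType) (lam x : R) : R :=
  (2 * lam)^-1 * expR (- `|x| / lam).

Definition is_laplace (R : realType) (dO : measure_display) (O : measurableType dO)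
  (P : probability O R) (lam : R) (X : {RV P >-> R}) : Prop :=
  forall A : set R, measurable A ->
    P (X @^-1` A) = (\int[lebesgue_measure]_(x in A) (laplace_pdf lam x)%:E)%E.

Definition mutually_independent (R : realType) (dO : measure_display)
  (O : measurableType dO) (P : probability O R) (d : nat)
  (X : 'I_d -> {RV P >-> R}) : Prop :=
  forall A : 'I_d -> set R, (forall k, measurable (A k)) ->
    P (\bigcap_(k in [set: 'I_d]) (X k @^-1` A k)) =
    (\prod_(k < d) P (X k @^-1` A k))%E.

Definition alg2 (R : realType) (dO : measure_display) (O : measurableType dO)
  (P : probability O R) (n d : nat) (betabar : dataset R n d -> 'rV[R]_d)
  (Rn : 'I_d -> {RV P >-> R}) (D : dataset R n d) (w : O) : d.-tuple R :=
  [tuple betabar D ord0 k + Rn k w | k < d].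

Definition VLDP (R : realType) (dO : measure_display) (O : measurableType dO)
  (P : probability O R) (n d : nat) (eps : R)
  (Y : dataset R n d -> O -> d.-tuple R) : Prop :=
  forall (D D' : dataset R n d) (S : set (d.-tuple R)), measurable S ->
    (P (Y D @^-1` S) <= (expR eps)%:E * P (Y D' @^-1` S))%E.

Definition differ_in_one_record (R : realType) (n d : nat) (D D' : dataset R n d)
  : Prop := exists j, D j <> D' j /\ forall k, k <> j -> D k = D' k.

Definition RLDP (R : realType) (dO : measure_display) (O : measurableType dO)
  (P : probability O R) (n d : nat) (eps : R)
  (Y : dataset R n d -> O -> d.-tuple R) : Prop :=
  forall (D D' : dataset R n d) (S : set (d.-tuple R)), measurable S ->
    differ_in_one_record D D' ->
    (P (Y D @^-1` S) <= (expR eps)%:E * P (Y D' @^-1` S))%E.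

(* With K = exp(|t|/lam), the Laplace density p satisfies p(x - t) <= K p(x).
   Hence if w agrees with v except that w_j = v_j + t, then K times the law of
   v + R is the law of w + R plus a nonnegative measure: the image of
   (K p - p(. - t)) dx \x P under the map that replaces the j-th noise
   coordinate by x.  Changing the coordinates of betabar(D) into those of
   betabar(D') one at a time therefore costs at most
   exp(|betabar(D) - betabar(D')|_1 / lam) <= exp(2B / lam) = exp(eps), for any
   two datasets; this is VLDP, and RLDP is the special case of neighbours. *)

From HB Require Import structures.
From mathcomp Require Import all_boot all_order all_algebra.
From mathcomp Require Import all_classical all_reals all_analysis.
From mathcomp Require Import measurable_realfun ring lra.
Import Order.TTheory GRing.Theory Num.Theory.
Local Open Scope classical_set_scope.
Local Open Scope ring_scope.

(* The measure instance on [pushforward m f] is parameterized by a proof that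
   [f] is measurable, so it cannot be inferred and has to be named. *)
Local Notation pushforward_measure m mf :=
  (measure_function_pushforward__canonical__measure_function_Measure m mf).

Section lebesgue_translation_invariance.
Context {R : realType}.
Local Notation mu := (@lebesgue_measure R).

Lemma measurable_addl (a : R) :
  measurable_fun (T := measurableTypeR R) (U := measurableTypeR R) setT (+%R a).
Proof. exact: measurable_funD. Qed.

Lemma measurable_preimage_addl (a : R) {A : set R} :
  measurable A -> measurable (+%R a @^-1` A).
Proof.
by move=> mA; rewrite -[X in measurable X]setTI; exact: measurable_addl.
Qed.

Lemma lebesgue_measure_preimage_addl (a : R) (A : set R) : measurable A ->
  mu (+%R a @^-1` A) = mu A.
Proof.
move=> mA; rewrite [RHS](@lebesgue_measure_unique _
  (pushforward_measure mu (measurable_addl a))) // => _ [[b c] _ <-].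
rewrite /= /pushforward (_ : _ @^-1` _ = `](b - a), (c - a)]%classic); last first.
  by apply/seteqP; split => x /=; rewrite !in_itv /= ltrBlDl lerBrDl.
rewrite !lebesgue_measure_itv /= !lte_fin ltrD2r; case: ifP => // _.
by rewrite -!EFinB; congr EFin; lra.
Qed.

Lemma ge0_integral_preimage_addl (a : R) (f : R -> \bar R) (A : set R) :
  measurable A -> measurable_fun setT f -> (forall x, (0 <= f x)%E) ->
  (\int[mu]_(x in A) f x = \int[mu]_(x in +%R a @^-1` A) f (a + x)%R)%E.
Proof.
move=> mA mf f0; rewrite -(ge0_integral_pushforward (measurable_addl a)) //.
- apply: (eq_measure_integral (pushforward_measure mu (measurable_addl a))).
  move=> B mB _; symmetry; exact: lebesgue_measure_preimage_addl.
- exact: measurable_funS mf.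
Qed.

End lebesgue_translation_invariance.

Section density_measure.
Context {R : realType} (f : R -> R).
Hypotheses (mf : measurable_fun setT f) (f_ge0 : forall x, 0 <= f x).

Definition density (A : set R) : \bar R :=
  (\int[lebesgue_measure]_(x in A) (f x)%:E)%E.

Let density0 : density set0 = 0%E.
Proof. exact: integral_set0. Qed.

Let density_ge0 A : (0 <= density A)%E.
Proof. by apply: integral_ge0 => x _; rewrite lee_fin. Qed.

Let density_sigma_additive : semi_sigma_additive density.
Proof.
move=> F mF tF mUF; rewrite /density.
rewrite (@ge0_integral_bigcup _ (measurableTypeR R) _ lebesgue_measure F _ mF
  _ _ tF).
- by apply: is_cvg_ereal_nneg_natsum_cond => n _ _; exact: density_ge0.
- exact/measurable_funTS/measurable_EFinP.
- by move=> x _; rewrite lee_fin.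
Qed.

HB.instance Definition _ :=
  isMeasure.Build _ _ _ density density0 density_ge0 density_sigma_additive.

Definition density_measure : {measure set R -> \bar R} := density.

End density_measure.
Arguments density_measure {R f}.

Section laplace.
Context {R : realType} (lam : R).
Hypothesis lam_gt0 : 0 < lam.
Local Notation pdf := (laplace_pdf lam).

Lemma laplace_pdf_ge0 x : 0 <= pdf x.
Proof.
by rewrite /laplace_pdf mulr_ge0 ?expR_ge0 // invr_ge0 mulr_ge0 // ltW.
Qed.

Lemma measurable_laplace_pdf : measurable_fun setT pdf.
Proof.
apply: measurable_funM => //; apply: measurableT_comp => //.
by apply: measurable_funM => //; apply: measurable_funN; exact: normr_measurable.
Qed.

Lemma laplace_pdfB_le x t : pdf (x - t) <= expR (`|t| / lam) * pdf x.
Proof.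
rewrite /laplace_pdf mulrCA ler_pM2l ?invr_gt0 ?mulr_gt0 // -expRD ler_expR.
have : `|x| <= `|x - t| + `|t| by rewrite (le_trans _ (ler_normD _ _)) // subrK.
by rewrite -mulrDl ler_pM2r ?invr_gt0 //; lra.
Qed.

Definition laplace_prob (A : set R) : \bar R :=
  (\int[lebesgue_measure]_(x in A) (pdf x)%:E)%E.

Lemma laplace_prob_ge0 (A : set R) : (0 <= laplace_prob A)%E.
Proof. by apply: integral_ge0 => x _; rewrite lee_fin laplace_pdf_ge0. Qed.

Definition laplace_shift_defect (t x : R) : R :=
  expR (`|t| / lam) * pdf x - pdf (x - t).

Lemma laplace_shift_defect_ge0 t x : 0 <= laplace_shift_defect t x.
Proof. by rewrite subr_ge0 laplace_pdfB_le. Qed.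

Lemma measurable_laplace_shift_defect t :
  measurable_fun setT (laplace_shift_defect t).
Proof.
apply: measurable_funB.
  by apply: measurable_funM => //; exact: measurable_laplace_pdf.
apply: measurableT_comp; first exact: measurable_laplace_pdf.
exact: measurable_funB.
Qed.

Definition laplace_shift_defect_measure t :=
  density_measure (measurable_laplace_shift_defect t)
    (laplace_shift_defect_ge0 t).

Lemma laplace_prob_shift (a t : R) (B : set R) : measurable B ->
  ((expR (`|t| / lam))%:E * laplace_prob (+%R a @^-1` B) =
   laplace_prob (+%R (a + t) @^-1` B) +
   laplace_shift_defect_measure t (+%R a @^-1` B))%E.
Proof.
move=> mB; have maB := measurable_preimage_addl a mB.
have mpdf : measurable_fun setT (fun x => (pdf x)%:E).
  by apply/measurable_EFinP; exact: measurable_laplace_pdf.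
have pdf_ge0 x : (0 <= (pdf x)%:E)%E by rewrite lee_fin laplace_pdf_ge0.
rewrite /laplace_prob [X in (_ = X + _)%E](ge0_integral_preimage_addl (- t)) //;
  last exact: measurable_preimage_addl.
rewrite (_ : _ @^-1` _ = +%R a @^-1` B); last first.
  by apply/funext => x /=; rewrite addrA addrK.
rewrite /= /density -ge0_integralD //; last 3 first.
- apply/measurable_funTS/measurable_EFinP.
  exact: measurableT_comp measurable_laplace_pdf (measurable_addl _).
- by move=> x _; rewrite lee_fin laplace_shift_defect_ge0.
- apply/measurable_funTS/measurable_EFinP.
  exact: measurable_laplace_shift_defect.
rewrite -ge0_integralZl //; last exact: measurable_funTS.
apply: eq_integral => x _; rewrite -EFinD -EFinM; congr EFin.
by rewrite /laplace_shift_defect (addrC (- t)); ring.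
Qed.

End laplace.
Arguments laplace_shift_defect_measure {R lam}.
Arguments laplace_prob_shift {R lam}.

Section rectangles.
Context {dT} {T : measurableType dT} {d : nat}.

Definition rect (A : 'I_d -> set T) : set (d.-tuple T) :=
  [set x | forall k, A k (tnth x k)].

Definition measurable_rects : set (set (d.-tuple T)) :=
  [set S | exists2 A, (forall k, measurable (A k)) & S = rect A].

Definition unconstrain (j : 'I_d) (A : 'I_d -> set T) (k : 'I_d) : set T :=
  if k == j then setT else A k.

Lemma measurable_unconstrain j A :
  (forall k, measurable (A k)) -> forall k, measurable (unconstrain j A k).
Proof. by move=> mA k; rewrite /unconstrain; case: ifP. Qed.

Lemma measurable_rectsI : setI_closed measurable_rects.
Proof.
move=> _ _ [A mA ->] [B mB ->]; exists (fun k => A k `&` B k).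
  by move=> k; exact: measurableI.
apply/seteqP; split => x /=; first by move=> [Ax Bx] k.
by move=> ABx; split => k; case: (ABx k).
Qed.

Lemma measurable_rectsT : measurable_rects setT.
Proof. by exists (fun=> setT) => //; apply/seteqP; split. Qed.

Lemma measurable_rect A : (forall k, measurable (A k)) -> measurable (rect A).
Proof.
move=> mA.
have -> : rect A = \bigcap_(k in [set: 'I_d]) ((@tnth d T)^~ k @^-1` A k).
  by apply/seteqP; split => x /= Ax k; [move=> _|]; exact: Ax.
apply: fin_bigcap_measurable; first exact: finite_finset.
by move=> k _; rewrite -[X in measurable X]setTI; exact: measurable_tnth.
Qed.

Lemma measurable_rects_generate :
  @measurable _ (d.-tuple T) = <<s measurable_rects >>.
Proof.
apply/seteqP; split; last first.
  apply: smallest_sub; first exact: sigma_algebra_measurable.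
  by move=> _ [A mA ->]; exact: measurable_rect.
apply: smallest_sub; first exact: smallest_sigma_algebra.
apply: (big_ind (fun X => X `<=` <<s measurable_rects >>)) => //.
  by move=> X Y XS YS Z [/XS|/YS].
move=> i _ _ [B mB <-]; apply: sub_sigma_algebra.
exists (fun k => if k == i then B else setT); first by move=> k; case: ifP.
apply/seteqP; split => x /=; first by move=> [_ Bx] k; case: eqP => // ->.
by move=> /(_ i); rewrite eqxx.
Qed.

End rectangles.

Section laplace_mechanism.
Context {R : realType} {dO} {O : measurableType dO} (P : probability O R).
Context {d : nat} (noise : 'I_d -> {RV P >-> R}) (lam : R).
Hypotheses (lam_gt0 : 0 < lam) (noise_indep : mutually_independent noise).
Hypothesis noise_laplace : forall k, is_laplace lam (noise k).

Definition perturb (v : 'I_d -> R) (w : O) : d.-tuple R :=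
  [tuple v k + noise k w | k < d].

Lemma measurable_perturb v : measurable_fun setT (perturb v).
Proof.
apply/measurable_fun_tnthP => k.
rewrite (_ : _ \o _ = fun w => v k + noise k w); last first.
  by apply/funext => w /=; rewrite tnth_mktuple.
by apply: measurable_funD => //; exact: measurable_funPT.
Qed.

Lemma perturb_preimage_rect v A : perturb v @^-1` rect A =
  \bigcap_(k in [set: 'I_d]) (noise k @^-1` (+%R (v k) @^-1` A k)).
Proof.
apply/seteqP; split => w /= vwA k; last by rewrite tnth_mktuple; exact: vwA.
by move=> _; have := vwA k; rewrite tnth_mktuple.
Qed.

Lemma prob_perturb_rect v (A : 'I_d -> set R) : (forall k, measurable (A k)) ->
  P (perturb v @^-1` rect A) =
  (\prod_(k < d) laplace_prob lam (+%R (v k) @^-1` A k))%E.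
Proof.
move=> mA; have mvA k := measurable_preimage_addl (v k) (mA k).
rewrite perturb_preimage_rect noise_indep //.
by apply: eq_bigr => k _; exact: noise_laplace.
Qed.

Lemma prob_perturb_rect_split v j (A : 'I_d -> set R) :
  (forall k, measurable (A k)) ->
  P (perturb v @^-1` rect A) = (laplace_prob lam (+%R (v j) @^-1` A j) *
    P (perturb v @^-1` rect (unconstrain j A)))%E.
Proof.
move=> mA; have laplace_probT : laplace_prob lam setT = 1%E.
  by rewrite /laplace_prob -(noise_laplace j) // preimage_setT probability_setT.
rewrite !prob_perturb_rect //; last exact: measurable_unconstrain.
rewrite [in RHS](bigD1 j) //= /unconstrain eqxx preimage_setT laplace_probT mul1e.
rewrite (bigD1 j) //=; congr (_ * _)%E.
by apply: eq_bigr => k /negbTE ->.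
Qed.

Section update_one_coordinate.
Variables (v w : 'I_d -> R) (j : 'I_d) (t : R).
Hypotheses (wj : w j = v j + t) (wk : forall k, k != j -> w k = v k).

Definition perturb_replaced (xw : R * O) : d.-tuple R :=
  [tuple v k + (if k == j then xw.1 else noise k xw.2) | k < d].

Lemma measurable_perturb_replaced : measurable_fun setT perturb_replaced.
Proof.
apply/measurable_fun_tnthP => k.
rewrite (_ : _ \o _ = fun xw => v k + (if k == j then xw.1 else noise k xw.2)).
  apply: measurable_funD => //; case: (k == j); first exact: measurable_fst.
  exact: measurableT_comp (measurable_funPT (noise k)) measurable_snd.
by apply/funext => xw /=; rewrite tnth_mktuple.
Qed.

Lemma perturb_replaced_preimage_rect A : perturb_replaced @^-1` rect A =
  (+%R (v j) @^-1` A j) `*` (perturb v @^-1` rect (unconstrain j A)).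
Proof.
apply/seteqP; split => -[x w'] /=.
  move=> xwA; split; first by have := xwA j; rewrite tnth_mktuple eqxx.
  by move=> k; have := xwA k; rewrite !tnth_mktuple /unconstrain; case: ifP.
move=> [Ax vwA] k; have := vwA k; rewrite !tnth_mktuple /unconstrain.
by case: eqVneq => [->|].
Qed.

Lemma perturb_preimage_rect_unconstrain A :
  perturb w @^-1` rect (unconstrain j A) = perturb v @^-1` rect (unconstrain j A).
Proof.
apply/seteqP; split => w' /= vwA k; have := vwA k;
  by rewrite !tnth_mktuple /unconstrain; case: eqVneq => // /wk ->.
Qed.

(* Both sides are measures in [S]; by independence and [laplace_prob_shift]
   they agree on rectangles, hence everywhere. *)
Lemma perturb_update_decomposition S : measurable S ->
  ((expR (`|t| / lam))%:E * P (perturb v @^-1` S) =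
   P (perturb w @^-1` S) +
   (laplace_shift_defect_measure lam_gt0 t \x P) (perturb_replaced @^-1` S))%E.
Proof.
move=> mS; pose K : {nonneg R} := NngNum (expR_ge0 (`|t| / lam)).
pose m1 := mscale K (pushforward_measure P (measurable_perturb v)).
pose m2 := measure_add (pushforward_measure P (measurable_perturb w))
  (pushforward_measure (laplace_shift_defect_measure lam_gt0 t \x P)%E
     measurable_perturb_replaced).
suff /(_ S mS) : forall S, measurable S -> m1 S = m2 S.
  by rewrite /m1 /m2 /= /mscale measure_addE.
apply: (measure_unique measurable_rects (fun=> setT)).
- exact: measurable_rects_generate.
- exact: measurable_rectsI.
- by move=> _; exact: measurable_rectsT.
- by rewrite bigcup_const.
- move=> _ [A mA ->].
  rewrite /m1 /m2 /= /msum /mscale /= !big_ord_recl big_ord0 adde0 /=.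
  rewrite /pushforward.
  have mvA : measurable (perturb v @^-1` rect (unconstrain j A)).
    rewrite -[X in measurable X]setTI; apply: measurable_perturb => //.
    by apply: measurable_rect; exact: measurable_unconstrain.
  rewrite perturb_replaced_preimage_rect (product_measure1E
    (laplace_shift_defect_measure lam_gt0 t) P
    (measurable_preimage_addl _ (mA j)) mvA).
  rewrite [in LHS](prob_perturb_rect_split v j) //.
  rewrite [P (perturb w @^-1` _)](prob_perturb_rect_split w j) // wj muleA.
  rewrite (laplace_prob_shift lam_gt0 (v j) t _ (mA j)).
  rewrite ge0_muleDl ?laplace_prob_ge0 //.
  by rewrite perturb_preimage_rect_unconstrain.
- move=> _; rewrite /= /mscale /= /pushforward preimage_setT probability_setT.
  by rewrite mule1 ltry.
Qed.

End update_one_coordinate.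
Arguments perturb_update_decomposition {v w j t}.

Lemma prob_perturb_update_le {v w j t} : w j = v j + t ->
  (forall k, k != j -> w k = v k) -> forall S, measurable S ->
  (P (perturb w @^-1` S) <= (expR (`|t| / lam))%:E * P (perturb v @^-1` S))%E.
Proof.
move=> wj wk S mS; rewrite (perturb_update_decomposition wj wk _ mS).
exact/leeDl/measure_ge0.
Qed.

Lemma prob_perturb_le b b' S : measurable S ->
  (P (perturb b @^-1` S) <=
   (expR ((\sum_(k < d) `|b k - b' k|) / lam))%:E * P (perturb b' @^-1` S))%E.
Proof.
move=> mS; pose mix m k := if (val k < m)%N then b k else b' k.
suff /(_ d (leqnn d)) : forall m, (m <= d)%N -> (P (perturb (mix m) @^-1` S) <=
    (expR ((\sum_(k < d | (val k < m)%N) `|b k - b' k|) / lam))%:E *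
    P (perturb b' @^-1` S))%E.
  have -> : mix d = b by apply/funext => k; rewrite /mix ltn_ord.
  by rewrite (eq_bigl xpredT) // => k; rewrite ltn_ord.
elim=> [_|m IH lt_md].
  have -> : mix 0%N = b' by apply/funext.
  by rewrite big_pred0 // mul0r expR0 mul1e.
pose j := Ordinal lt_md.
have mixj : mix m.+1 j = mix m j + (b j - b' j).
  by rewrite /mix /= ltnSn ltnn subrKC.
have mixk k : k != j -> mix m.+1 k = mix m k.
  by move=> kj; rewrite /mix ltnS leq_eqVlt -[m]/(val j) val_eqE (negbTE kj).
apply: le_trans (prob_perturb_update_le mixj mixk _ mS) _.
rewrite (bigD1 j) /=; last by rewrite ltnSn.
rewrite (eq_bigl (fun k : 'I_d => (val k < m)%N)); last first.
  move=> k; rewrite ltnS leq_eqVlt -[m]/(val j) val_eqE.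
  by case: eqVneq => [->|]; rewrite ?ltnn ?andbF ?andbT.
rewrite mulrDl expRD EFinM -muleA lee_wpmul2l ?lee_fin ?expR_ge0 //.
exact: IH (ltnW lt_md).
Qed.

End laplace_mechanism.
Arguments prob_perturb_le {R dO O P d noise lam}.

Lemma sum_normB_le_norm1D {R : realType} {d : nat} (b b' : 'rV[R]_d) :
  \sum_(k < d) `|b ord0 k - b' ord0 k| <= norm1 b + norm1 b'.
Proof. by rewrite -big_split; apply: ler_sum => k _; exact: ler_normB. Qed.

Theorem theorem3 (R : realType) (n d : nat) (B eps : R)
  (dO : measure_display) (O : measurableType dO) (P : probability O R)
  (betabar : dataset R n d -> 'rV[R]_d) (Rn : 'I_d -> {RV P >-> R}) :
  (1 <= n)%N -> (1 <= d)%N -> 0 < B -> 0 < eps ->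
  is_constrained_mle B betabar ->
  mutually_independent Rn ->
  (forall k, is_laplace (2 * B / eps) (Rn k)) ->
  VLDP P eps (alg2 betabar Rn) /\ RLDP P eps (alg2 betabar Rn).
Proof.
move=> _ _ B_gt0 eps_gt0 mle indep laplace.
have lam_gt0 : 0 < 2 * B / eps by rewrite divr_gt0 // mulr_gt0.
suff vldp : VLDP P eps (alg2 betabar Rn) by split => // D D' S mS _; exact: vldp.
move=> D D' S mS.
have := prob_perturb_le lam_gt0 indep laplace (betabar D ord0) (betabar D' ord0).
move=> /(_ S mS) /le_trans; apply.
rewrite lee_wpmul2r ?measure_ge0 // lee_fin ler_expR ler_pdivrMr //.
rewrite mulrC divfK ?gt_eqF //.
apply: le_trans (sum_normB_le_norm1D (betabar D) (betabar D')) _.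
by have [+ _] := mle D; have [+ _] := mle D'; lra.
Qed.
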